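(* Let $C_5$ be the $5$-cycle (pentagon) and $I(C_5)$ its edge ideal in a polynomial ring in five variables over a field. Then $I(C_5)^q$ has linear quotients for every $q\ge 2$.
   Context: The edge ideal of a graph is generated by the products $x_ix_j$ of variables corresponding to its edges $\{i,j\}$. A monomial ideal generated in a single degree has linear quotients if its minimal monomial generators can be ordered $u_1>\cdots>u_r$ so that each colon ideal $(u_1,\ldots,u_i):u_{i+1}$, $1\le i<r$, is generated by a subset of the variables. *)

From HB Require Import structures.
From mathcomp Require Import all_boot all_order all_algebra.
From mathcomp Require Import multinomials.mpoly.
Set Implicit Arguments. Unset Strict Implicit. Unset Printing Implicit Defensive.
Import GRing.Theory.
Local Open Scope ring_scope.

Section Ideals.
Variables (K : fieldType) (n : nat).
Local Notation P := {mpoly K[n]}.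

Definition in_ideal (gs : seq P) (p : P) : Prop :=
  exists cs : seq P, p = \sum_(i < size gs) cs`_i * gs`_i.

Definition in_colon (gs : seq P) (u : P) (p : P) : Prop :=
  in_ideal gs (p * u).

Fixpoint pow_gens (gs : seq P) (q : nat) : seq P :=
  if q is q'.+1 then [seq g * h | g <- gs, h <- pow_gens gs q'] else [:: 1].

Definition in_ideal_pow (gs : seq P) (q : nat) (p : P) : Prop :=
  in_ideal (pow_gens gs q) p.

Definition edge_pairs (e : rel 'I_n) : seq ('I_n * 'I_n) :=
  filter (fun ij : 'I_n * 'I_n => (nat_of_ord ij.1 < nat_of_ord ij.2)%N && e ij.1 ij.2)
         [seq (i, j) | i <- enum 'I_n, j <- enum 'I_n].

Definition edge_gens (e : rel 'I_n) : seq P :=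
  map (fun ij : 'I_n * 'I_n => 'X_ij.1 * 'X_ij.2) (edge_pairs e).

Definition min_mon_gen (I : P -> Prop) (m : 'X_{1..n}) : Prop :=
  I 'X_[m] /\ forall m' : 'X_{1..n}, (m' <= m)%MM -> m' != m -> ~ I 'X_[m'].

Definition has_linear_quotients (I : P -> Prop) : Prop :=
  exists s : seq 'X_{1..n},
    [/\ uniq s,
        (forall m, m \in s <-> min_mon_gen I m) &
        forall i : nat, (0 < i < size s)%N ->
          exists S : {set 'I_n}, forall p : P,
            in_colon [seq 'X_[m] | m <- take i s] 'X_[nth 0%MM s i] p <->
            in_ideal [seq 'X_j | j <- enum S] p].

End Ideals.

Definition C5 : rel 'I_5 :=
  fun i j => (j == (i.+1 %% 5)%N :> nat) || (i == (j.+1 %% 5)%N :> nat).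

From HB Require Import structures.
From mathcomp Require Import all_boot all_order all_algebra.
From mathcomp Require Import multinomials.mpoly.
From mathcomp Require Import zify.
Set Implicit Arguments. Unset Strict Implicit. Unset Printing Implicit Defensive.
Import GRing.Theory.
Local Open Scope ring_scope.

(* A minimal generator of I(C5)^q is x^a with a = edges_exp c, where c counts
   how often each edge occurs in it.  Order these generators lexicographically
   by a_0, by a_1 + a_4 and by a ranking of the balance (a_1 + 2 a_3) - (2 a_2 + a_4).
   A list of monomials has linear quotients as soon as, whenever g precedes w,
   some x_k with deg_k w < deg_k g multiplies w into the ideal of the
   generators preceding w: the colon ideal is then generated by such
   variables.  Here the earlier generator is w x_k / x_l, obtained from w by
   trading one or two of its edges, and it is found by a case analysis on the
   first key in which g and w differ.  The hypothesis q >= 2 is needed when g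
   has smaller x_0-degree: for q = 1 the colon ideal of x_0 x_4 is (x_3, x_1 x_2). *)

Section MonomialIdeals.
Variables (K : fieldType) (n : nat).
Local Notation P := {mpoly K[n]}.
Implicit Types (gs : seq P) (p : P) (ms : seq 'X_{1..n}) (m w : 'X_{1..n}).

Lemma in_ideal0 gs : in_ideal gs 0.
Proof. by exists [::]; rewrite big1 // => i _; rewrite nth_nil mul0r. Qed.

Lemma in_idealD gs p1 p2 : in_ideal gs p1 -> in_ideal gs p2 -> in_ideal gs (p1 + p2).
Proof.
case=> cs1 -> [cs2 ->]; exists [seq cs1`_i + cs2`_i | i <- iota 0 (size gs)].
rewrite -big_split /=; apply: eq_bigr => i _.
by rewrite (nth_map 0%N) ?size_iota // nth_iota // add0n mulrDl.
Qed.

Lemma in_idealMl gs r p : in_ideal gs p -> in_ideal gs (r * p).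
Proof.
case=> cs ->; exists [seq r * cs`_i | i <- iota 0 (size gs)].
rewrite mulr_sumr; apply: eq_bigr => i _.
by rewrite (nth_map 0%N) ?size_iota // nth_iota // add0n mulrA.
Qed.

Lemma in_ideal_mem gs g : g \in gs -> in_ideal gs g.
Proof.
move=> gs_g; have g_idx : (index g gs < size gs)%N by rewrite index_mem.
exists [seq ((i == index g gs)%N%:R : P) | i <- iota 0 (size gs)].
rewrite (bigD1 (Ordinal g_idx)) //= big1 ?addr0.
  by rewrite (nth_map 0%N) ?size_iota // nth_iota // eqxx mul1r nth_index.
move=> i /negbTE i_idx; rewrite (nth_map 0%N) ?size_iota // nth_iota //.
by rewrite add0n -[index g gs]/(nat_of_ord (Ordinal g_idx)) (inj_eq val_inj) i_idx mul0r.
Qed.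

Lemma in_ideal_monomialsP ms p :
  in_ideal [seq 'X_[m] | m <- ms] p <->
  (forall m, m \in msupp p -> exists2 g, g \in ms & (g <= m)%MM).
Proof.
split=> [[cs ->] m | supp_p].
- rewrite size_map mcoeff_msupp raddf_sum /= => p_m.
  have [i] : exists i : 'I_(size ms), (cs`_i * 'X_[nth 0%MM ms i])@_m != 0.
    apply/existsP; apply: contraR p_m => /existsPn cs_m.
    by apply/eqP/big1 => i _; rewrite (nth_map 0%MM) //; apply/eqP/negbNE/cs_m.
  rewrite -mcoeff_msupp (perm_mem (msuppMX _ _)) => /mapP [m' _ ->].
  by exists (nth 0%MM ms i); [exact: mem_nth | exact: lem_addr].
- rewrite (mpolyE p) big_seq; apply: big_ind => [||m pm]; first exact: in_ideal0.
    exact: in_idealD.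
  have [g ms_g gm] := supp_p m pm.
  rewrite -(submK gm) mpolyXD scalerAl; apply/in_idealMl/in_ideal_mem.
  exact: map_f.
Qed.

Lemma in_colon_monomialsP ms w p :
  in_colon [seq 'X_[m] | m <- ms] 'X_[w] p <->
  (forall m, m \in msupp p -> exists2 g, g \in ms & (g <= w + m)%MM).
Proof.
rewrite /in_colon in_ideal_monomialsP.
split=> [supp_pw m pm | supp_p m'].
  by apply: supp_pw; rewrite (perm_mem (msuppMX p w)) map_f.
by rewrite (perm_mem (msuppMX p w)) => /mapP [m pm ->]; apply: supp_p.
Qed.

Lemma in_ideal_varsP (S : {set 'I_n}) p :
  in_ideal [seq 'X_j | j <- enum S] p <->
  (forall m, m \in msupp p -> exists2 j, j \in S & (0 < m j)%N).
Proof.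
rewrite (_ : [seq 'X_j | j <- enum S] = [seq 'X_[m] | m <- [seq U_(j)%MM | j <- enum S]]);
  last by rewrite -map_comp.
rewrite in_ideal_monomialsP.
split=> supp_p m /supp_p [g].
- case/mapP=> j; rewrite mem_enum => S_j -> /mnm_lepP/(_ j).
  by rewrite mnm1E eqxx; exists j.
- move=> S_g m_g; exists U_(g)%MM; first by apply: map_f; rewrite mem_enum.
  by rewrite lep1mP -lt0n.
Qed.

Lemma lepm_mdeg_eq g m : (g <= m)%MM -> mdeg g = mdeg m -> g = m.
Proof.
move=> gm deg_gm; rewrite -(submK gm); suff -> : (m - g)%MM = 0%MM by rewrite add0m.
by apply/eqP; rewrite -mdeg_eq0; have := congr1 mdeg (submK gm); rewrite mdegD deg_gm; lia.
Qed.

Lemma min_mon_gen_equideg ms d : (forall g, g \in ms -> mdeg g = d) ->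
  forall m, min_mon_gen (in_ideal [seq 'X_[g] : P | g <- ms]) m <-> m \in ms.
Proof.
move=> deg_ms m.
have memI m' : in_ideal [seq 'X_[g] : P | g <- ms] 'X_[m'] <->
               exists2 g, g \in ms & (g <= m')%MM.
  rewrite in_ideal_monomialsP msuppX.
  split=> [|mem_m' m'']; first by apply; rewrite mem_seq1.
  by rewrite mem_seq1 => /eqP ->.
split=> [[/memI [g ms_g gm] min_m] | ms_m].
  have [<- // | gNm] := eqVneq g m.
  by case: (min_m g gm gNm); apply/memI; exists g => //; apply: lepm_refl.
split=> [|m' m'm m'Nm /memI [g ms_g gm']].
  by apply/memI; exists m => //; apply: lepm_refl.
have g_eq_m : g = m.
  by apply: lepm_mdeg_eq (lepm_trans (m3 := m) gm' m'm) _; rewrite !deg_ms.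
case/eqP: m'Nm; apply/mnmP => i; apply/anti_leq.
by rewrite (mnm_lepP m'm) -g_eq_m (mnm_lepP gm').
Qed.

Definition colon_vars ms w : {set 'I_n} :=
  [set k | has (fun a => a <= w + U_(k))%MM ms].

Lemma in_colon_varsP ms w :
  (forall g, g \in ms -> exists2 k, (w k < g k)%N & k \in colon_vars ms w) ->
  forall p, in_colon [seq 'X_[m] | m <- ms] 'X_[w] p <->
            in_ideal [seq 'X_j | j <- enum (colon_vars ms w)] p.
Proof.
move=> exchange p; rewrite in_colon_monomialsP in_ideal_varsP.
suff eqv m : (exists2 g, g \in ms & (g <= w + m)%MM) <->
             (exists2 j, j \in colon_vars ms w & (0 < m j)%N).
  by split=> supp_p m /supp_p /eqv.
split=> [[g ms_g gwm] | [j]].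
  have [k wg S_k] := exchange g ms_g; exists k => //.
  by have := mnm_lepP gwm k; rewrite mnmDE; lia.
rewrite inE => /hasP [a ms_a awj] mj; exists a => //.
apply/mnm_lepP => i; have := mnm_lepP awj i.
by rewrite !mnmDE mnm1E; case: eqP => [<-|]; lia.
Qed.

Section ExchangeOrder.
Variables (I : P -> Prop) (M : seq 'X_{1..n}) (r : rel 'X_{1..n}).
Hypotheses (r_trans : transitive r) (r_total : total r).
Hypothesis min_genP : forall m, min_mon_gen I m <-> m \in M.
Hypothesis exchange : forall w g, w \in M -> g \in M -> g != w -> r g w ->
  exists2 k, (w k < g k)%N & exists2 a, a \in M & ~~ r w a && (a <= w + U_(k))%MM.

Theorem linear_quotients_of_exchange : has_linear_quotients I.
Proof.
pose s := sort r (undup M).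
have s_uniq : uniq s by rewrite sort_uniq undup_uniq.
have mem_s m : (m \in s) = (m \in M) by rewrite mem_sort mem_undup.
have r_nth i j : (i <= j < size s)%N -> r (nth 0%MM s i) (nth 0%MM s j).
  case/andP=> ij js; apply: (sorted_leq_nth r_trans) => //; rewrite ?inE//.
  - by move=> x; have := r_total x x; rewrite orbb.
  - exact/sort_sorted.
  - exact: leq_ltn_trans js.
exists s; split=> // [m | i /andP [i_gt0 i_lt]]; first by rewrite mem_s min_genP.
set w := nth 0%MM s i.
exists (colon_vars (take i s) w); apply: in_colon_varsP => g g_take.
have s_g := mem_take g_take; rewrite in_take // in g_take.
have gNw : g != w by rewrite -(nth_index 0%MM s_g) /w nth_uniq ?index_mem // ltn_eqF.
have w_M : w \in M by rewrite -mem_s mem_nth.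
have g_M : g \in M by rewrite -mem_s.
have gw : r g w by rewrite -(nth_index 0%MM s_g) r_nth // ltnW.
have [k wg [a M_a /andP [wNa awk]]] := exchange w_M g_M gNw gw.
exists k; rewrite // inE; apply/hasP; exists a => //.
have s_a : a \in s by rewrite mem_s.
rewrite in_take // ltnNge; apply: contra wNa => ia.
by rewrite -(nth_index 0%MM s_a) r_nth // ia index_mem.
Qed.

End ExchangeOrder.
End MonomialIdeals.

Definition i0 : 'I_5 := @Ordinal 5 0 isT.
Definition i1 : 'I_5 := @Ordinal 5 1 isT.
Definition i2 : 'I_5 := @Ordinal 5 2 isT.
Definition i3 : 'I_5 := @Ordinal 5 3 isT.
Definition i4 : 'I_5 := @Ordinal 5 4 isT.

Variant ord5_spec : 'I_5 -> Prop :=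
  Ord5_0 : ord5_spec i0 | Ord5_1 : ord5_spec i1 | Ord5_2 : ord5_spec i2
| Ord5_3 : ord5_spec i3 | Ord5_4 : ord5_spec i4.

Lemma ord5P (k : 'I_5) : ord5_spec k.
Proof.
by case: k => [[|[|[|[|[|k]]]]] lt_k5] //; rewrite (bool_irrelevance lt_k5 isT); constructor.
Qed.

Definition mnm5 (a0 a1 a2 a3 a4 : nat) : 'X_{1..5} :=
  [multinom nth 0%N [:: a0; a1; a2; a3; a4] i | i < 5].

Lemma mnm5E a0 a1 a2 a3 a4 (i : 'I_5) :
  mnm5 a0 a1 a2 a3 a4 i = nth 0%N [:: a0; a1; a2; a3; a4] i.
Proof. exact: mnmE. Qed.

Lemma mdeg5 (m : 'X_{1..5}) : mdeg m = (m i0 + m i1 + m i2 + m i3 + m i4)%N.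
Proof.
rewrite mdegE !big_ord_recl big_ord0 addn0 !addnA.
by congr (_ + _ + _ + _ + _)%N; congr (m _); apply/val_inj.
Qed.

Lemma mnm5_eqP (m m' : 'X_{1..5}) :
  [/\ m i0 = m' i0, m i1 = m' i1, m i2 = m' i2, m i3 = m' i3 & m i4 = m' i4] -> m = m'.
Proof. by case=> *; apply/mnmP => k; case: (ord5P k). Qed.

Lemma mnm5_leP (m m' : 'X_{1..5}) :
  [/\ m i0 <= m' i0, m i1 <= m' i1, m i2 <= m' i2, m i3 <= m' i3 & m i4 <= m' i4]%N ->
  (m <= m')%MM.
Proof. by case=> *; apply/mnm_lepP => k; case: (ord5P k). Qed.

(* [c i] is the multiplicity of the edge {i, i+1 mod 5} in a product of edges. *)
Definition edges_exp (c : 'X_{1..5}) : 'X_{1..5} :=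
  mnm5 (c i4 + c i0) (c i0 + c i1) (c i1 + c i2) (c i2 + c i3) (c i3 + c i4).

Ltac mnm5_lia := rewrite /edges_exp ?mnmDE ?mnm1E ?mnm0E ?mnm5E /=; lia.

Ltac mnm5_eq := apply: mnm5_eqP; split; mnm5_lia.

Lemma edges_expD c c' : edges_exp (c + c') = (edges_exp c + edges_exp c')%MM.
Proof. by mnm5_eq. Qed.

Lemma mdeg_edges_exp c : mdeg (edges_exp c) = (2 * mdeg c)%N.
Proof. by rewrite !mdeg5; mnm5_lia. Qed.

Definition C5_edge_exps : seq 'X_{1..5} :=
  [seq (U_(ij.1) + U_(ij.2))%MM | ij <- edge_pairs C5].

Fixpoint C5_pow_exps (q : nat) : seq 'X_{1..5} :=
  if q is q'.+1 then [seq (e + m)%MM | e <- C5_edge_exps, m <- C5_pow_exps q']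
  else [:: 0%MM].

Lemma pow_gens_C5 (K : fieldType) q :
  pow_gens (edge_gens K C5) q = [seq 'X_[m] | m <- C5_pow_exps q].
Proof.
elim: q => [|q IHq] /=; first by rewrite mpolyX0.
rewrite IHq /edge_gens /C5_edge_exps -map_comp map_allpairs allpairs_mapl.
by rewrite allpairs_mapr; apply: eq_allpairs => ij m /=; rewrite !mpolyXD.
Qed.

Lemma mem_edge_pairs_C5 (i j : 'I_5) : ((i, j) \in edge_pairs C5) = (i < j)%N && C5 i j.
Proof.
by rewrite mem_filter andbC /= (allpairs_f (fun a b => (a, b))) ?mem_enum.
Qed.

Lemma mem_C5_edge_exps e : e \in C5_edge_exps <-> exists k, e = edges_exp U_(k).
Proof.
split=> [/mapP [[i j]] /= | [k ->]].
  rewrite mem_edge_pairs_C5 => /andP [lt_ij ij_C5] ->.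
  case: (ord5P i) (ord5P j) lt_ij ij_C5 => [] [] //= _ _;
  first [exists i0; mnm5_eq | exists i1; mnm5_eq | exists i2; mnm5_eq
        | exists i3; mnm5_eq | exists i4; mnm5_eq].
apply/mapP; case: (ord5P k);
  [exists (i0, i1) | exists (i1, i2) | exists (i2, i3) | exists (i3, i4) | exists (i0, i4)];
  by rewrite ?mem_edge_pairs_C5 //=; mnm5_eq.
Qed.

Lemma mem_C5_pow_exps q m :
  m \in C5_pow_exps q <-> exists2 c, mdeg c = q & m = edges_exp c.
Proof.
elim: q m => [|q IHq] m /=.
  rewrite mem_seq1; split=> [/eqP -> | [c /eqP]].
    by exists 0%MM; rewrite ?mdeg0 //; mnm5_eq.
  by rewrite mdeg_eq0 => /eqP -> ->; apply/eqP/mnm5_eqP; split; mnm5_lia.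
split=> [/allpairsP [[e m'] /= [/mem_C5_edge_exps [k ->] /IHq [c c_q ->] ->]] | [c c_q ->]].
  by exists (U_(k) + c)%MM; rewrite ?edges_expD // mdegD mdeg1 c_q.
have [k c_k | c0] := pickP (fun k => c k != 0%N); last first.
  by move: c_q; rewrite mdegE big1 // => k _; apply/eqP/negbFE/c0.
have Uc : (U_(k) <= c)%MM by rewrite lep1mP.
rewrite -(submK Uc) edges_expD addmC; apply: allpairs_f.
  by apply/mem_C5_edge_exps; exists k.
apply/IHq; exists (c - U_(k))%MM => //.
by have := congr1 mdeg (submK Uc); rewrite mdegD mdeg1 c_q; lia.
Qed.

Section C5Order.
Local Open Scope nat_scope.

(* With s = a1 + 2 a3 and t = 2 a2 + a4, the balance s - t is ranked 0, -1, 1, -2, 2, ... *)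
Definition balance_rank (a : 'X_{1..5}) : nat :=
  let s := a i1 + 2 * a i3 in let t := 2 * a i2 + a i4 in
  if t <= s then 2 * (s - t) else 2 * (t - s) - 1.

Definition C5_le (a b : 'X_{1..5}) : bool :=
  (a i0 < b i0) || (a i0 == b i0) &&
  ((a i1 + a i4 < b i1 + b i4) ||
   (a i1 + a i4 == b i1 + b i4) && (balance_rank a <= balance_rank b)).

Lemma C5_le_trans : transitive C5_le.
Proof. by move=> b a c; rewrite /C5_le; lia. Qed.

Lemma C5_le_total : total C5_le.
Proof. by move=> a b; rewrite /C5_le; lia. Qed.

(* Each alternative lets [w = edges_exp c] trade one or two of its edges for
   others, giving a generator [w x_k / x_l] that precedes [w]. *)
Definition colon_var (c : 'X_{1..5}) (k : 'I_5) : bool :=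
  let a := edges_exp c in
  match val k with
  | 1 => (0 < c i4) && ((0 < c i2) || (a i1 + 2 * a i3 + 2 <= 2 * a i2 + a i4))
  | 2 => (0 < c i0) || (0 < c i3)
  | 3 => (0 < c i1) || (0 < c i4)
  | 4 => (0 < c i0) && ((0 < c i2) || (2 * a i2 + a i4 + 1 <= a i1 + 2 * a i3))
  | _ => false
  end.

Ltac colon_lia := rewrite /colon_var /edges_exp /= ?mnm5E /=; lia.

Lemma exchange_x0 c d : 2 <= mdeg c -> mdeg d = mdeg c ->
  edges_exp d i0 < edges_exp c i0 ->
  exists2 k, edges_exp c k < edges_exp d k & colon_var c k.
Proof.
rewrite !mdeg5 /edges_exp !mnm5E /= => q_ge2 dc lt0.
have [lt_d0 | lt_d4] : d i0 < c i0 \/ d i4 < c i4 by lia.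
- have [lt2 | ge2] := ltnP (c i1 + c i2) (d i1 + d i2); first by exists i2; colon_lia.
  have [c2_0 | c2_gt0] := posnP (c i2); last by exists i4; colon_lia.
  have [c14_0 | c14_gt0] := posnP (c i1 + c i4); last by exists i3; colon_lia.
  by exists i4; colon_lia.
- have [lt3 | ge3] := ltnP (c i2 + c i3) (d i2 + d i3); first by exists i3; colon_lia.
  have [c2_0 | c2_gt0] := posnP (c i2); last by exists i1; colon_lia.
  have [c03_0 | c03_gt0] := posnP (c i0 + c i3); last by exists i2; colon_lia.
  by exists i1; colon_lia.
Qed.

Lemma exchange_x14 c d : mdeg d = mdeg c -> edges_exp d i0 = edges_exp c i0 ->
  edges_exp d i1 + edges_exp d i4 < edges_exp c i1 + edges_exp c i4 ->
  exists2 k, edges_exp c k < edges_exp d k & colon_var c k.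
Proof.
rewrite !mdeg5 /edges_exp !mnm5E /= => dc eq0 lt14.
have [lt2 | lt3] : c i1 + c i2 < d i1 + d i2 \/ c i2 + c i3 < d i2 + d i3 by lia.
  by exists i2; colon_lia.
by exists i3; colon_lia.
Qed.

Lemma exchange_balance c d : mdeg d = mdeg c -> d != c ->
  edges_exp d i0 = edges_exp c i0 ->
  edges_exp d i1 + edges_exp d i4 = edges_exp c i1 + edges_exp c i4 ->
  balance_rank (edges_exp d) <= balance_rank (edges_exp c) ->
  exists2 k, edges_exp c k < edges_exp d k & colon_var c k.
Proof.
rewrite !mdeg5 /balance_rank /edges_exp !mnm5E /= => dc dNc eq0 eq14 rank.
have [lt2 | [lt3 | eq1]] :
    c i1 + c i2 < d i1 + d i2 \/ c i2 + c i3 < d i2 + d i3 \/ d i1 = c i1 by lia.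
- by exists i2; colon_lia.
- by exists i3; colon_lia.
have [lt_c0 | [lt_d0 | eq_0]] : c i0 < d i0 \/ d i0 < c i0 \/ d i0 = c i0 by lia.
- by exists i1; move: rank; do 2 case: ifP => ?; colon_lia.
- by exists i4; move: rank; do 2 case: ifP => ?; colon_lia.
- by case/eqP: dNc; apply: mnm5_eqP; split; lia.
Qed.

Lemma exchange_var_C5 c d : 2 <= mdeg c -> mdeg d = mdeg c -> d != c ->
  C5_le (edges_exp d) (edges_exp c) ->
  exists2 k, edges_exp c k < edges_exp d k & colon_var c k.
Proof.
move=> q_ge2 dc dNc.
case/orP=> [lt0 | /andP [/eqP eq0 /orP [lt14 | /andP [/eqP eq14 rank]]]].
- exact: exchange_x0.
- exact: exchange_x14.
- exact: exchange_balance.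
Qed.

Ltac exchange_by a0 a1 a2 a3 a4 :=
  exists (mnm5 a0 a1 a2 a3 a4);
  [rewrite !mdeg5 | apply/andP; split; [rewrite /C5_le /balance_rank | apply: mnm5_leP; split]];
  rewrite /edges_exp ?mnmDE ?mnm1E ?mnm5E /=; repeat case: ifP => ?; lia.

Lemma colon_var_witness c k : colon_var c k ->
  exists2 c', mdeg c' = mdeg c &
    ~~ C5_le (edges_exp c) (edges_exp c') && (edges_exp c' <= edges_exp c + U_(k))%MM.
Proof.
case: (ord5P k); rewrite /colon_var /edges_exp /= ?mnm5E /= => //.
- case/andP=> c4 /orP [c2 | bal].
  + by exchange_by (c i0) (c i1).+1 (c i2).-1 (c i3).+1 (c i4).-1.
  + by exchange_by (c i0).+1 (c i1) (c i2) (c i3) (c i4).-1.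
- case/orP=> [c0 | c3].
  + by exchange_by (c i0).-1 (c i1).+1 (c i2) (c i3) (c i4).
  + by exchange_by (c i0) (c i1) (c i2).+1 (c i3).-1 (c i4).
- case/orP=> [c1 | c4].
  + by exchange_by (c i0) (c i1).-1 (c i2).+1 (c i3) (c i4).
  + by exchange_by (c i0) (c i1) (c i2) (c i3).+1 (c i4).-1.
- case/andP=> c0 /orP [c2 | bal].
  + by exchange_by (c i0).-1 (c i1).+1 (c i2).-1 (c i3).+1 (c i4).
  + by exchange_by (c i0).-1 (c i1) (c i2) (c i3) (c i4).+1.
Qed.

Lemma exchange_C5 q w g : 2 <= q ->
  w \in C5_pow_exps q -> g \in C5_pow_exps q -> g != w -> C5_le g w ->
  exists2 k, w k < g k &
    exists2 a, a \in C5_pow_exps q & ~~ C5_le w a && (a <= w + U_(k))%MM.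
Proof.
move=> q_ge2 /mem_C5_pow_exps [c c_q ->] /mem_C5_pow_exps [d d_q ->] gNw gw.
have dNc : d != c by apply: contraNneq gNw => ->.
have [||k wg /colon_var_witness [c' c'c wNa]] := exchange_var_C5 _ _ dNc gw.
- by rewrite c_q.
- by rewrite c_q d_q.
exists k => //; exists (edges_exp c') => //.
by apply/mem_C5_pow_exps; exists c'; rewrite ?c'c.
Qed.

End C5Order.

Theorem proposition4p2 (K : fieldType) (q : nat) :
  (2 <= q)%N ->
  has_linear_quotients (in_ideal_pow (edge_gens K C5) q).
Proof.
move=> q_ge2; rewrite /in_ideal_pow pow_gens_C5.
apply: (linear_quotients_of_exchange C5_le_trans C5_le_total).
  apply: (@min_mon_gen_equideg _ _ _ (2 * q)%N) => m /mem_C5_pow_exps [c <- ->].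
  exact: mdeg_edges_exp.
by move=> w g; apply: exchange_C5.
Qed.
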